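(* Let $a\ge b\ge1$ be integers with either $b\ge2$, or $b=1$ and $a\ge5$, and $A=\begin{pmatrix}2&-a\\-b&2\end{pmatrix}$. Then: (1) for $i=1,2$ and $j,k\in\mathbb Z_+$, $\gamma=\beta_i^k+\beta_i^j$ satisfies $(\gamma,\gamma)>0$; moreover (a) if $b\ge2$, then $\beta_i^k+\beta_i^j$ is never a root; (b) if $b=1$ and $a\ge5$, then $\beta_1^{2k+1}+\beta_1^{2k+3}$ and $\beta_2^{2k}+\beta_2^{2k+2}$ ($k\in\mathbb Z_+$) are real roots, and these are the only pairs of roots of the same type ($\beta_1^\cdot,\beta_1^\cdot$ or $\beta_2^\cdot,\beta_2^\cdot$) whose sum is a real root; (2) for all $j,k\in\mathbb Z_+$, $\gamma=\beta_1^k+\beta_2^j$ is a root, and $(\gamma,\gamma)\le0$ unless $b=1$ and $(k,j)=(0,0)$.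
   Context: Let $\mathfrak g(A)$ be the Kac–Moody algebra with simple roots $\alpha_1,\alpha_2$, root system $\Delta$, invariant form $(\alpha_1,\alpha_1)=2$, $(\alpha_2,\alpha_2)=2a/b$, $(\alpha_1,\alpha_2)=-a$; a root $\alpha$ is real iff $(\alpha,\alpha)>0$. $\mathbb Z_+=\{0,1,2,\dots\}$. Define $c_0=d_0=0$, $c_1=d_1=1$, $c_{k+2}+c_k=a d_{k+1}$, $d_{k+2}+d_k=b c_{k+1}$, and $\beta_1^j=c_j\alpha_1+d_{j+1}\alpha_2$, $\beta_2^j=c_{j+1}\alpha_1+d_j\alpha_2$ (the positive real roots). *)

From mathcomp Require Import all_boot all_order all_algebra.
Set Implicit Arguments. Unset Strict Implicit. Unset Printing Implicit Defensive.
Import Order.TTheory GRing.Theory Num.Theory.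
Local Open Scope ring_scope.

(* An element x1 alpha_1 + x2 alpha_2 of the root lattice Q is the pair (x1,x2). *)
Definition rvec := (int * int)%type.
Definition vadd (u v : rvec) : rvec := (u.1 + v.1, u.2 + v.2).
Definition vopp (u : rvec) : rvec := (- u.1, - u.2).
Definition alpha1 : rvec := (1, 0).
Definition alpha2 : rvec := (0, 1).

(* Invariant form: (a1,a1)=2, (a2,a2)=2a/b, (a1,a2)=-a. *)
Definition form (a b : nat) (u v : rvec) : rat :=
  2 * (u.1%:~R * v.1%:~R) + (2 * a%:R / b%:R) * (u.2%:~R * v.2%:~R)
  - a%:R * (u.1%:~R * v.2%:~R + u.2%:~R * v.1%:~R).
Definition norm2 (a b : nat) (u : rvec) : rat := form a b u u.

(* Pairings with the simple coroots: <alpha_j, alpha_i^v> = a_ij,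
   a_12 = -a, a_21 = -b. *)
Definition pair1 (a : nat) (u : rvec) : int := 2 * u.1 - a%:Z * u.2.
Definition pair2 (b : nat) (u : rvec) : int := - (b%:Z * u.1) + 2 * u.2.

Definition refl1 (a : nat) (u : rvec) : rvec := (u.1 - pair1 a u, u.2).
Definition refl2 (b : nat) (u : rvec) : rvec := (u.1, u.2 - pair2 b u).

(* W-orbit of a set P (W generated by r1, r2; reflections are involutions). *)
Inductive Worbit (a b : nat) (P : rvec -> Prop) : rvec -> Prop :=
| Wo_base u : P u -> Worbit a b P u
| Wo_r1 u : Worbit a b P u -> Worbit a b P (refl1 a u)
| Wo_r2 u : Worbit a b P u -> Worbit a b P (refl2 b u).

Definition simple_root (u : rvec) : Prop := u = alpha1 \/ u = alpha2.

(* Kac's fundamental set K: alpha in Q_+ \ {0}, <alpha, alpha_i^v> <= 0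
   for i = 1,2, and supp alpha connected in the Dynkin diagram. *)
Definition fund_set_K (a b : nat) (u : rvec) : Prop :=
  [/\ (0 <= u.1) && (0 <= u.2), u <> (0, 0), pair1 a u <= 0, pair2 b u <= 0
    & ((u.1 != 0) && (u.2 != 0) -> (a != 0)%N)].

(* Root system Delta = Delta^re  u  W(K)  u  -W(K)   (Kac, Prop. 5.1, Thm 5.4). *)
Definition is_root (a b : nat) (u : rvec) : Prop :=
  Worbit a b simple_root u \/ Worbit a b (fund_set_K a b) u
  \/ Worbit a b (fund_set_K a b) (vopp u).

Definition real_root (a b : nat) (u : rvec) : Prop :=
  is_root a b u /\ 0 < norm2 a b u.

(* cd n = ((c_n, d_n), (c_{n+1}, d_{n+1})) *)
Fixpoint cd (a b : nat) (n : nat) : (int * int) * (int * int) :=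
  match n with
  | 0 => ((0, 0), (1, 1))
  | n'.+1 => let: (p, q) := cd a b n' in
             (q, (a%:Z * q.2 - p.1, b%:Z * q.1 - p.2))
  end.
Definition cseq (a b : nat) (n : nat) : int := (cd a b n).1.1.
Definition dseq (a b : nat) (n : nat) : int := (cd a b n).1.2.

Definition beta1 (a b : nat) (j : nat) : rvec := (cseq a b j, dseq a b j.+1).
Definition beta2 (a b : nat) (j : nat) : rvec := (cseq a b j.+1, dseq a b j).

From Pilot Require Import Defs.
From mathcomp Require Import all_boot all_order all_algebra.
From mathcomp Require Import zify ring lra.
Import Order.TTheory GRing.Theory Num.Theory.
Local Open Scope ring_scope.

(* Everything is read off the W-invariant form.  The products
   (beta_i^j, beta_i^(j+n)) are positive multiples of ec n or ed n, the pairings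
   of beta_2^n and beta_1^n with the simple coroots, which are positive for the
   admissible (a, b); so same-type sums have positive square length.  A root of
   positive square length lies in the W-orbit of a simple root, hence is not twice
   a lattice vector and has square length at most 2a/b.  A sum beta_i^j + beta_i^k
   is twice a lattice vector if j = k; if j < k it exceeds that bound unless both
   summands have square length 2, and then its square length is 4 + 2 ec (k - j):
   more than 2a/b when b >= 2, and at most 2a only for k - j = 2 when b = 1.
   The mixed sums beta_1^k + beta_2^j are permuted by r_1 and r_2, and the ones
   with |k - j| <= 1 lie in Kac's fundamental set (except beta_1^0 + beta_2^0 =
   r_2 alpha_1 when b = 1) because ec and ed grow fast enough. *)

Lemma parity_ind (P : nat -> Prop) :
  (forall m, P m.*2) -> (forall m, P (m.*2).+1) -> forall n, P n.
Proof.
move=> Peven Podd n; rewrite -[n]odd_double_half.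
by case: (odd n); [apply: Podd | apply: Peven].
Qed.

Section Sequences.
Variables a b : nat.

Local Notation c := (cseq a b).
Local Notation d := (dseq a b).

Lemma cseqSS n : c n.+2 = a%:Z * d n.+1 - c n.
Proof. by rewrite /cseq /dseq /=; case: (cd a b n) => -[? ?] [? ?]. Qed.

Lemma dseqSS n : d n.+2 = b%:Z * c n.+1 - d n.
Proof. by rewrite /cseq /dseq /=; case: (cd a b n) => -[? ?] [? ?]. Qed.

(* [ec n] = <beta2 n, alpha_1^v> and [ed n] = <beta1 n, alpha_2^v>. *)
Definition ec n : int := 2 * c n.+1 - a%:Z * d n.
Definition ed n : int := - (b%:Z * c n) + 2 * d n.+1.

Lemma ec0 : ec 0 = 2. Proof. rewrite /ec /cseq /dseq /=; lia. Qed.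
Lemma ed0 : ed 0 = 2. Proof. rewrite /ed /cseq /dseq /=; lia. Qed.
Lemma ec1 : ec 1 = a%:Z. Proof. rewrite /ec cseqSS /cseq /dseq /=; lia. Qed.
Lemma ed1 : ed 1 = b%:Z. Proof. rewrite /ed dseqSS /cseq /dseq /=; lia. Qed.

Lemma ecSS n : ec n.+2 = a%:Z * ed n.+1 - ec n.
Proof.
rewrite /ec /ed (cseqSS n.+1) (dseqSS n).
have := cseqSS n; have := dseqSS n.+1; lia.
Qed.

Lemma edSS n : ed n.+2 = b%:Z * ec n.+1 - ed n.
Proof.
rewrite /ec /ed (dseqSS n.+1) (cseqSS n).
have := cseqSS n.+1; have := dseqSS n; lia.
Qed.

Lemma cseqSS_ec n : c n.+2 = c n + ec n.+1.
Proof. rewrite /ec cseqSS /cseq /dseq /=; lia. Qed.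

Lemma dseqSS_ed n : d n.+2 = d n + ed n.+1.
Proof. rewrite /ed dseqSS /cseq /dseq /=; lia. Qed.

Definition balanced (e : bool) (x y : int) : Prop :=
  if e then b%:Z * x = a%:Z * y else x = y.

Lemma balanced_rec (x y : nat -> int) e :
    (forall n, x n.+2 = a%:Z * y n.+1 - x n) ->
    (forall n, y n.+2 = b%:Z * x n.+1 - y n) ->
    balanced e (x 0) (y 0) -> balanced (~~ e) (x 1) (y 1) ->
  forall n, balanced (odd n (+) e) (x n) (y n).
Proof.
move=> xSS ySS bal0 bal1 n.
suff /(_ n) [] : forall m, balanced (odd m (+) e) (x m) (y m)
    /\ balanced (odd m.+1 (+) e) (x m.+1) (y m.+1) by [].
elim=> [|m [IHm IHm1]] //; split => //; clear bal0 bal1.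
move: IHm IHm1; rewrite /balanced /= xSS ySS negbK.
by case: (odd m); case: e => /=; nia.
Qed.

Lemma cd_balanced n : balanced (~~ odd n) (c n) (d n).
Proof.
rewrite -addbT; apply: balanced_rec cseqSS dseqSS _ _ n;
  by rewrite /balanced /cseq /dseq /=; lia.
Qed.

Lemma ec_ed_balanced n : balanced (odd n) (ec n) (ed n).
Proof.
rewrite -[odd n]addbF; apply: balanced_rec ecSS edSS _ _ n;
  by rewrite /balanced /= ?ec0 ?ed0 ?ec1 ?ed1 //; lia.
Qed.

Lemma cseq_odd n : odd n -> c n = d n.
Proof. by move=> hn; have := cd_balanced n; rewrite /balanced hn. Qed.

Lemma cseq_even n : ~~ odd n -> b%:Z * c n = a%:Z * d n.
Proof. by move=> hn; have := cd_balanced n; rewrite /balanced hn. Qed.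

Lemma ec_even n : ~~ odd n -> ec n = ed n.
Proof. by move=> /negbTE hn; have := ec_ed_balanced n; rewrite /balanced hn. Qed.

Lemma ec_odd n : odd n -> b%:Z * ec n = a%:Z * ed n.
Proof. by move=> hn; have := ec_ed_balanced n; rewrite /balanced hn. Qed.

End Sequences.

Section LargeB.
Variables a b : nat.
Hypotheses (hb2 : (2 <= b)%N) (hba : (b <= a)%N).

Lemma ec_ed_nondecreasing n :
  (0 < ec a b n <= ec a b n.+1) /\ (0 < ed a b n <= ed a b n.+1).
Proof.
elim: n => [|n [/andP[ec_gt0 ecS] /andP[ed_gt0 edS]]].
  by rewrite ec0 ec1 ed0 ed1; split; apply/andP; split; lia.
rewrite ecSS edSS; case: (boolP (odd n.+1)) => [/(ec_odd a b) | /(ec_even a b)] bal;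
  by split; apply/andP; split; nia.
Qed.

Lemma ec_ge n : (2 <= n)%N -> a%:Z * b%:Z - 2 <= ec a b n.
Proof.
elim: n => [|[|n] IHn] // _.
case: n IHn => [|n] IHn; first by rewrite ecSS ed1 ec0; lia.
have [/andP[_ ?] _] := ec_ed_nondecreasing n.+2; have := IHn isT; lia.
Qed.

End LargeB.

Section UnitB.
Variable a : nat.
Hypothesis ha5 : (5 <= a)%N.

Local Notation e := (ed a 1).

Lemma ec_b1 n : ec a 1 n = if odd n then a%:Z * e n else e n.
Proof.
by case: (boolP (odd n)) => [/(ec_odd a 1) | /(ec_even a 1)]; rewrite ?mul1r.
Qed.

Lemma ed_b1_evenSS m : e (m.*2).+2 = a%:Z * e (m.*2).+1 - e m.*2.
Proof. by rewrite edSS ec_b1 /= odd_double mul1r. Qed.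

Lemma ed_b1_oddSS m : e (m.*2).+3 = e (m.*2).+2 - e (m.*2).+1.
Proof. by rewrite edSS ec_b1 /= odd_double mul1r. Qed.

Lemma ed_b1_even_bounds m :
  0 < e m.*2 /\ e (m.*2).+1 <= e m.*2 <= 2 * e (m.*2).+1.
Proof.
elim: m => [|m [e_gt0 /andP[e1_le e_le]]].
  by rewrite ed0 ed1; split; lia.
rewrite doubleS ed_b1_oddSS ed_b1_evenSS; split; [nia | apply/andP; split; nia].
Qed.

Lemma ed_b1_window m :
  [/\ 0 < e m.*2 /\ e (m.*2).+1 <= e m.*2 <= 2 * e (m.*2).+1,
      0 < e (m.*2).+2 /\ e (m.*2).+3 <= e (m.*2).+2 <= 2 * e (m.*2).+3,
      e (m.*2).+2 = a%:Z * e (m.*2).+1 - e m.*2,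
      e (m.*2).+3 = e (m.*2).+2 - e (m.*2).+1
    & e (m.*2).+4 = a%:Z * e (m.*2).+3 - e (m.*2).+2].
Proof.
have := ed_b1_evenSS m.+1; have := ed_b1_even_bounds m.+1; rewrite !doubleS.
move=> bounds2 step4; split=> //;
  [exact: ed_b1_even_bounds | exact: ed_b1_evenSS | exact: ed_b1_oddSS].
Qed.

Lemma ec_ed_b1_pos n : 0 < ec a 1 n /\ 0 < e n.
Proof.
elim/parity_ind: n => m; rewrite ec_b1 /= ?odd_double /=;
  have [[? /andP[? ?]] [? /andP[? ?]] ? ? ?] := ed_b1_window m; split; nia.
Qed.

Lemma ec_ed_b1_leSS n : ec a 1 n <= ec a 1 n.+2 /\ e n <= e n.+2.
Proof.
elim/parity_ind: n => m; rewrite !ec_b1 /= ?odd_double /=;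
  have [[? /andP[? ?]] [? /andP[? ?]] ? ? ?] := ed_b1_window m; split; nia.
Qed.

Lemma ec_ed_b1_leSSS n : ec a 1 n <= ec a 1 n.+3 /\ e n <= e n.+3.
Proof.
elim/parity_ind: n => m; rewrite !ec_b1 /= ?odd_double /=;
  have [[? /andP[? ?]] [? /andP[? ?]] ? ? ?] := ed_b1_window m; split; nia.
Qed.

Lemma ec_b1_odd_geS n : odd n -> ec a 1 n.+1 <= ec a 1 n.
Proof.
elim/parity_ind: n => m; rewrite !ec_b1 /= ?odd_double //= => _;
  have [[? /andP[? ?]] [? /andP[? ?]] ? ? ?] := ed_b1_window m; nia.
Qed.

Lemma ed_b1_even_geS n : ~~ odd n -> e n.+1 <= e n.
Proof.
elim/parity_ind: n => m; rewrite /= ?odd_double //= => _;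
  have [[? /andP[? ?]] [? /andP[? ?]] ? ? ?] := ed_b1_window m; nia.
Qed.

Lemma ec_b1_gt p : a%:Z - 2 < ec a 1 (p.+2).*2.
Proof.
elim: p => [|p IHp].
  by rewrite /= !(ecSS, edSS) ec0 ed1 !mul1r !mulr1; nia.
by rewrite doubleS; have [? _] := ec_ed_b1_leSS (p.+2).*2; lia.
Qed.

Lemma ec_b1_le_eq2 n : ~~ odd n -> (0 < n)%N ->
  4 + 2 * ((ec a 1 n)%:~R : rat) <= 2 * (a%:R / 1%:R) -> n = 2%N.
Proof.
rewrite divr1 => /negbTE n_even n_gt0 le2a.
have : ec a 1 n <= a%:Z - 2.
  by rewrite -(ler_int rat) (_ : (a%:Z - 2)%:~R = a%:R - 2 :> rat); [lra | ring].
move: n_gt0; rewrite -[n]odd_double_half n_even add0n.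
by case: n./2 => [|[|p]] // _; have := ec_b1_gt p; lia.
Qed.

End UnitB.

Section InvariantForm.
Variables a b : nat.

Lemma vaddC u v : vadd u v = vadd v u.
Proof. by rewrite /vadd addrC [u.2 + _]addrC. Qed.

Lemma refl1K : involutive (refl1 a).
Proof. by case=> x y; rewrite /refl1 /pair1 /=; congr (_, _); lia. Qed.

Lemma refl2K : involutive (refl2 b).
Proof. by case=> x y; rewrite /refl2 /pair2 /=; congr (_, _); lia. Qed.

Lemma refl1D u v : refl1 a (vadd u v) = vadd (refl1 a u) (refl1 a v).
Proof. by rewrite /vadd /refl1 /pair1 /=; congr (_, _); lia. Qed.

Lemma refl2D u v : refl2 b (vadd u v) = vadd (refl2 b u) (refl2 b v).
Proof. by rewrite /vadd /refl2 /pair2 /=; congr (_, _); lia. Qed.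

Lemma formC u v : Defs.form a b u v = Defs.form a b v u.
Proof. by rewrite /Defs.form; set q := (_ / b%:R); ring. Qed.

Lemma norm2D u v :
  norm2 a b (vadd u v) = norm2 a b u + norm2 a b v + 2 * Defs.form a b u v.
Proof. by rewrite /norm2 /Defs.form /vadd /=; set q := (_ / b%:R); ring. Qed.

Lemma norm2N u : norm2 a b (vopp u) = norm2 a b u.
Proof. by rewrite /norm2 /Defs.form /vopp /=; set q := (_ / b%:R); ring. Qed.

Lemma form_refl1 u v : Defs.form a b (refl1 a u) (refl1 a v) = Defs.form a b u v.
Proof. by rewrite /Defs.form /refl1 /pair1 /=; set q := (_ / b%:R); ring. Qed.

Hypothesis b_gt0 : (0 < b)%N.

Let b_neq0 : (b%:R : rat) != 0. Proof. by rewrite pnatr_eq0 -lt0n. Qed.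

Lemma form_refl2 u v : Defs.form a b (refl2 b u) (refl2 b v) = Defs.form a b u v.
Proof. by rewrite /Defs.form /refl2 /pair2 /=; field. Qed.

Lemma form_alpha1 u : Defs.form a b alpha1 u = (pair1 a u)%:~R.
Proof. by rewrite /Defs.form /pair1 /=; set q := (_ / b%:R); ring. Qed.

Lemma form_alpha2 u : Defs.form a b alpha2 u = a%:R / b%:R * (pair2 b u)%:~R.
Proof. by rewrite /Defs.form /pair2 /=; field. Qed.

Lemma norm2_alpha1 : norm2 a b alpha1 = 2.
Proof. by rewrite /norm2 /Defs.form /=; field. Qed.

Lemma norm2_alpha2 : norm2 a b alpha2 = 2 * (a%:R / b%:R).
Proof. by rewrite /norm2 /Defs.form /=; field. Qed.

Lemma norm2E u : norm2 a b u =
  u.1%:~R * (pair1 a u)%:~R + u.2%:~R * (a%:R / b%:R * (pair2 b u)%:~R).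
Proof. by rewrite /norm2 /Defs.form /pair1 /pair2 /=; field. Qed.

End InvariantForm.

Section RootNorms.
Variables a b : nat.
Hypotheses (b_gt0 : (0 < b)%N) (hba : (b <= a)%N).

Let a_gt0 : (0 < a)%N. Proof. exact: leq_trans hba. Qed.

Lemma ratio_gt0 : 0 < (a%:R / b%:R : rat).
Proof. by rewrite divr_gt0 ?ltr0n. Qed.

Lemma ratio_ge1 : 1 <= (a%:R / b%:R : rat).
Proof. by rewrite ler_pdivlMr ?ltr0n // mul1r ler_nat. Qed.

Lemma norm2_fund_set u : fund_set_K a b u -> norm2 a b u <= 0.
Proof.
move=> [/andP[u1_ge0 u2_ge0] _ pair1_le0 pair2_le0 _]; rewrite norm2E //.
have q_gt0 := ratio_gt0; set q := _ / _ in q_gt0 *.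
have : q * (pair2 b u)%:~R <= 0 by rewrite pmulr_rle0 // lerz0.
move: u1_ge0 u2_ge0 pair1_le0; rewrite -!(ler0z rat) -(lerz0 rat); nra.
Qed.

Definition doubled (u : rvec) : Prop := exists v, u = vadd v v.

Lemma doubled_refl1 u : doubled u -> doubled (refl1 a u).
Proof. by case=> v ->; exists (refl1 a v); rewrite refl1D. Qed.

Lemma doubled_refl2 u : doubled u -> doubled (refl2 b u).
Proof. by case=> v ->; exists (refl2 b v); rewrite refl2D. Qed.

Lemma Worbit_simple_root u : Worbit a b simple_root u ->
  ~ doubled u /\ norm2 a b u <= 2 * (a%:R / b%:R).
Proof.
elim=> {u} [u [->|->] | u _ [IH1 IH2] | u _ [IH1 IH2]].
- split; first by case=> -[x y] [] /=; lia.
  by rewrite norm2_alpha1 //; have := ratio_ge1; lra.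
- split; first by case=> -[x y] [] /=; lia.
  by rewrite norm2_alpha2.
- by rewrite /norm2 form_refl1; split=> // /doubled_refl1; rewrite refl1K.
- by rewrite /norm2 form_refl2 //; split=> // /doubled_refl2; rewrite refl2K.
Qed.

Lemma Worbit_fund_set u : Worbit a b (fund_set_K a b) u -> norm2 a b u <= 0.
Proof.
by elim=> {u} [u /norm2_fund_set // | u _ | u _]; rewrite /norm2 ?form_refl1 ?form_refl2.
Qed.

Lemma is_root_norm2_gt0 u : is_root a b u -> 0 < norm2 a b u ->
  ~ doubled u /\ norm2 a b u <= 2 * (a%:R / b%:R).
Proof.
case=> [/Worbit_simple_root // | [] /Worbit_fund_set]; rewrite ?norm2N;
  by move=> /le_gtF ->.
Qed.

End RootNorms.

Section Betas.
Variables a b : nat.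

Local Notation beta1 := (beta1 a b).
Local Notation beta2 := (beta2 a b).

Lemma beta1_0 : beta1 0 = alpha2. Proof. by []. Qed.
Lemma beta2_0 : beta2 0 = alpha1. Proof. by []. Qed.

Lemma pair1_beta2 n : pair1 a (beta2 n) = ec a b n. Proof. by []. Qed.
Lemma pair2_beta1 n : pair2 b (beta1 n) = ed a b n. Proof. by []. Qed.

Lemma refl1_beta1 n : refl1 a (beta1 n) = beta2 n.+1.
Proof. by rewrite /refl1 /pair1 /Defs.beta1 /Defs.beta2 /= cseqSS; congr (_, _); lia. Qed.

Lemma refl2_beta2 n : refl2 b (beta2 n) = beta1 n.+1.
Proof. by rewrite /refl2 /pair2 /Defs.beta1 /Defs.beta2 /= dseqSS; congr (_, _); lia. Qed.

Lemma refl1_beta2 n : refl1 a (beta2 n.+1) = beta1 n.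
Proof. by rewrite -refl1_beta1 refl1K. Qed.

Lemma refl2_beta1 n : refl2 b (beta1 n.+1) = beta2 n.
Proof. by rewrite -refl2_beta2 refl2K. Qed.

Lemma beta_Worbit n :
  Worbit a b simple_root (beta1 n) /\ Worbit a b simple_root (beta2 n).
Proof.
elim: n => [|n [IH1 IH2]]; first by split; apply: Wo_base; [right | left].
by rewrite -refl1_beta1 -refl2_beta2; split; [apply: Wo_r2 | apply: Wo_r1].
Qed.

Hypothesis b_gt0 : (0 < b)%N.

Lemma form_beta j n :
  Defs.form a b (beta1 j) (beta1 (j + n)) =
    (if odd j then (ec a b n)%:~R else a%:R / b%:R * (ed a b n)%:~R)
  /\ Defs.form a b (beta2 j) (beta2 (j + n)) =
    (if odd j then a%:R / b%:R * (ed a b n)%:~R else (ec a b n)%:~R).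
Proof.
elim: j => [|j [IH1 IH2]].
  by rewrite beta1_0 beta2_0 form_alpha1 // form_alpha2 // -pair1_beta2 -pair2_beta1.
rewrite addSn -!refl2_beta2 -!refl1_beta1 form_refl2 // form_refl1 /=.
by rewrite IH1 IH2; case: (odd j).
Qed.

Lemma norm2_beta j :
  norm2 a b (beta1 j) = (if odd j then 2 else 2 * (a%:R / b%:R))
  /\ norm2 a b (beta2 j) = (if odd j then 2 * (a%:R / b%:R) else 2).
Proof.
have [] := form_beta j 0; rewrite /norm2 addn0 ec0 ed0 => -> ->.
by case: (odd j); rewrite [_ * 2]mulrC.
Qed.

End Betas.

Definition admissible (a b : nat) : Prop :=
  ((2 <= b)%N /\ (b <= a)%N) \/ (b = 1%N /\ (5 <= a)%N).

Section Admissible.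
Variables a b : nat.
Hypothesis adm : admissible a b.

Let b_gt0 : (0 < b)%N. Proof. by case: adm => -[? ?]; lia. Qed.
Let hba : (b <= a)%N. Proof. by case: adm => -[? ?]; lia. Qed.

Lemma ec_ed_gt0 n : 0 < ec a b n /\ 0 < ed a b n.
Proof.
case: adm => [[hb2 _] | [-> ha5]]; last exact: ec_ed_b1_pos.
by have [/andP[? _] /andP[? _]] := @ec_ed_nondecreasing a b hb2 hba n.
Qed.

Lemma cseq_dseq_gt0 n :
  [/\ 0 <= cseq a b n, 0 <= dseq a b n, 0 < cseq a b n.+1 & 0 < dseq a b n.+1].
Proof.
elim: n => [|n [? ? ? ?]]; first by rewrite /cseq /dseq.
have [? ?] := ec_ed_gt0 n.+1.
by rewrite cseqSS_ec dseqSS_ed; split; lia.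
Qed.

Lemma form_beta_ge0 j k :
  0 <= Defs.form a b (beta1 a b j) (beta1 a b k)
  /\ 0 <= Defs.form a b (beta2 a b j) (beta2 a b k).
Proof.
wlog le_jk : j k / (j <= k)%N.
  move=> W; case: (leqP j k) => [/W // | /ltnW /W].
  by rewrite [Defs.form _ _ (beta1 _ _ k) _]formC [Defs.form _ _ (beta2 _ _ k) _]formC.
have [ec_gt0 ed_gt0] := ec_ed_gt0 (k - j); have ratio_gt0 := ratio_gt0 a b b_gt0 hba.
rewrite -(subnKC le_jk); have [-> ->] := form_beta a b b_gt0 j (k - j).
by case: (odd j); split; try apply: mulr_ge0; rewrite ?ler0z; apply: ltW.
Qed.

Lemma norm2_beta_gt0 j : 0 < norm2 a b (beta1 a b j) /\ 0 < norm2 a b (beta2 a b j).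
Proof.
have := ratio_gt0 a b b_gt0 hba; have [-> ->] := norm2_beta a b b_gt0 j.
by case: (odd j); split; lra.
Qed.

Lemma norm2_beta_sum_gt0 j k :
  0 < norm2 a b (vadd (beta1 a b k) (beta1 a b j))
  /\ 0 < norm2 a b (vadd (beta2 a b k) (beta2 a b j)).
Proof.
have [? ?] := norm2_beta_gt0 j; have [? ?] := norm2_beta_gt0 k.
have [? ?] := form_beta_ge0 k j; rewrite !norm2D; split; lra.
Qed.

Lemma norm2_beta1_sum j n :
  2 * (a%:R / b%:R) < norm2 a b (vadd (beta1 a b j) (beta1 a b (j + n)))
  \/ [/\ odd j, ~~ odd n
       & norm2 a b (vadd (beta1 a b j) (beta1 a b (j + n))) = 4 + 2 * (ec a b n)%:~R].
Proof.
have ratio := ratio_gt0 a b b_gt0 hba; have [g _] := form_beta_ge0 j (j + n).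
have [nj _] := norm2_beta a b b_gt0 j; have [njn _] := norm2_beta a b b_gt0 (j + n).
have [G _] := form_beta a b b_gt0 j n.
move: g; rewrite norm2D nj njn G oddD.
by case: (odd j); case: (odd n) => /= g; [left | right; split=> // | left | left]; lra.
Qed.

Lemma norm2_beta2_sum j n :
  2 * (a%:R / b%:R) < norm2 a b (vadd (beta2 a b j) (beta2 a b (j + n)))
  \/ [/\ ~~ odd j, ~~ odd n
       & norm2 a b (vadd (beta2 a b j) (beta2 a b (j + n))) = 4 + 2 * (ec a b n)%:~R].
Proof.
have ratio := ratio_gt0 a b b_gt0 hba; have [_ g] := form_beta_ge0 j (j + n).
have [_ nj] := norm2_beta a b b_gt0 j; have [_ njn] := norm2_beta a b b_gt0 (j + n).
have [_ G] := form_beta a b b_gt0 j n.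
move: g; rewrite norm2D nj njn G oddD.
by case: (odd j); case: (odd n) => /= g; [left | left | left | right; split=> //]; lra.
Qed.

Lemma beta1_sum_root j n : is_root a b (vadd (beta1 a b j) (beta1 a b (j + n))) ->
  [/\ odd j, ~~ odd n, (0 < n)%N & 4 + 2 * (ec a b n)%:~R <= 2 * (a%:R / b%:R : rat)].
Proof.
move=> /is_root_norm2_gt0 -/(_ b_gt0 hba) [|not_doubled norm2_le].
  by have [] := norm2_beta_sum_gt0 (j + n) j.
case: (posnP n) => [n0 | n_gt0].
  by case: not_doubled; exists (beta1 a b j); rewrite n0 addn0.
by case: (norm2_beta1_sum j n) => [| [? ? <-]] //; lra.
Qed.

Lemma beta2_sum_root j n : is_root a b (vadd (beta2 a b j) (beta2 a b (j + n))) ->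
  [/\ ~~ odd j, ~~ odd n, (0 < n)%N & 4 + 2 * (ec a b n)%:~R <= 2 * (a%:R / b%:R : rat)].
Proof.
move=> /is_root_norm2_gt0 -/(_ b_gt0 hba) [|not_doubled norm2_le].
  by have [] := norm2_beta_sum_gt0 (j + n) j.
case: (posnP n) => [n0 | n_gt0].
  by case: not_doubled; exists (beta2 a b j); rewrite n0 addn0.
by case: (norm2_beta2_sum j n) => [| [? ? <-]] //; lra.
Qed.

End Admissible.

Definition gamma (a b k j : nat) : rvec := vadd (beta1 a b k) (beta2 a b j).

Section Gamma.
Variables a b : nat.

Local Notation gamma := (gamma a b).
Local Notation imag_orbit := (Worbit a b (fund_set_K a b)).

Lemma refl1_gamma x y : refl1 a (gamma x y.+1) = gamma y x.+1.
Proof. by rewrite /gamma refl1D refl1_beta1 refl1_beta2 vaddC. Qed.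

Lemma refl2_gamma x y : refl2 b (gamma x.+1 y) = gamma y.+1 x.
Proof. by rewrite /gamma refl2D refl2_beta1 refl2_beta2 vaddC. Qed.

Lemma pair1_gamma x y : pair1 a (gamma x y) = ec a b y - ec a b x.+1.
Proof. rewrite /pair1 /gamma /= /ec (cseqSS a b x); lia. Qed.

Lemma pair2_gamma x y : pair2 b (gamma x y) = ed a b x - ed a b y.+1.
Proof. rewrite /pair2 /gamma /= /ed (dseqSS a b y); lia. Qed.

(* r_1 and r_2 swap the indices of gamma and shift one of them, which moves
   gamma k (k + n) and gamma (k + n) k two steps further from the diagonal. *)
Lemma imag_orbit_gamma :
    (forall k, imag_orbit (gamma k.+1 k.+1)) ->
    (forall k, imag_orbit (gamma k k.+1) /\ imag_orbit (gamma k.+1 k)) ->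
  forall k j, (0 < k + j)%N -> imag_orbit (gamma k j).
Proof.
move=> diag near.
suff off_diag n k : (0 < k + n)%N ->
    imag_orbit (gamma k (k + n)) /\ imag_orbit (gamma (k + n) k).
  move=> k j kj_gt0; case: (leqP k j) => [le_kj | /ltnW le_jk].
    by case: (off_diag (j - k)%N k); [lia | rewrite subnKC // => + _].
  by case: (off_diag (k - j)%N j); [lia | rewrite subnKC // => _ +].
elim/ltn_ind: n k => -[|[|n]] IH k kn_gt0.
- by case: k kn_gt0 => // k _; rewrite addn0; split.
- by rewrite addn1.
have [IH1 IH2] := IH n (leqnSn n.+1) k.+1 isT.
rewrite !addnS; split.
  by rewrite -refl1_gamma; apply: Wo_r1; rewrite -addSn.
by rewrite -refl2_gamma; apply: Wo_r2; rewrite -addSn.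
Qed.

Hypothesis adm : admissible a b.

Lemma gamma_fund_set x y :
  ec a b y <= ec a b x.+1 -> ed a b x <= ed a b y.+1 -> fund_set_K a b (gamma x y).
Proof.
move=> ec_le ed_le; rewrite /fund_set_K pair1_gamma pair2_gamma.
have [? ? ? ?] := cseq_dseq_gt0 a b adm x; have [? ? ? ?] := cseq_dseq_gt0 a b adm y.
split; rewrite /gamma /=; try lia.
- by case; lia.
- by move=> _; case: adm => -[? ?]; lia.
Qed.

Lemma imag_orbit_gamma_large_b : (2 <= b)%N -> forall k j, imag_orbit (gamma k j).
Proof.
move=> hb2 k j; have hba : (b <= a)%N by case: adm => -[? ?]; lia.
have mono := @ec_ed_nondecreasing a b hb2 hba.
have diag m : imag_orbit (gamma m m).
  have [/andP[_ ?] /andP[_ ?]] := mono m; exact/Wo_base/gamma_fund_set.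
case: (posnP (k + j)) => [/eqP | kj_gt0]; first by rewrite addn_eq0 => /andP[/eqP-> /eqP->].
apply: imag_orbit_gamma => // m.
have [/andP[_ ?] /andP[_ ?]] := mono m; have [/andP[_ ?] /andP[_ ?]] := mono m.+1.
by split; apply/Wo_base/gamma_fund_set; lia.
Qed.

Lemma imag_orbit_gamma_unit_b :
  b = 1%N -> forall k j, (0 < k + j)%N -> imag_orbit (gamma k j).
Proof.
move=> b1; have ha5 : (5 <= a)%N by case: adm => -[? ?]; lia.
apply: imag_orbit_gamma => m.
- case: (boolP (odd m)) => m_odd.
  + rewrite -refl2_gamma; apply/Wo_r2/Wo_base/gamma_fund_set; rewrite b1.
      by have [] := ec_ed_b1_leSSS a ha5 m.
    by apply: ed_b1_even_geS; rewrite //= m_odd.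
  + rewrite -refl1_gamma; apply/Wo_r1/Wo_base/gamma_fund_set; rewrite b1.
      by apply: ec_b1_odd_geS; rewrite //= m_odd.
    by have [] := ec_ed_b1_leSSS a ha5 m.
- have [? ?] := ec_ed_b1_leSS a ha5 m.
  by split; apply/Wo_base/gamma_fund_set; rewrite b1.
Qed.

Lemma gamma_root k j : is_root a b (gamma k j)
  /\ (~ (b = 1%N /\ k = 0%N /\ j = 0%N) -> norm2 a b (gamma k j) <= 0).
Proof.
have [[b1 [k0 j0]] | imag] : (b = 1%N /\ k = 0%N /\ j = 0%N) \/ imag_orbit (gamma k j).
  case: adm => [[hb2 _] | [b1 _]]; first by right; apply: imag_orbit_gamma_large_b.
  by case: (posnP (k + j)) => [| ?]; [left; lia | right; apply: imag_orbit_gamma_unit_b].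
- split=> [| /(_ (conj b1 (conj k0 j0)))//]; left.
  have -> : gamma k j = refl2 b alpha1.
    by rewrite k0 j0 /gamma beta1_0 beta2_0 b1 /refl2 /pair2.
  exact/Wo_r2/Wo_base/or_introl.
- split=> [| _]; first by right; left.
  by apply: Worbit_fund_set imag; case: adm => -[? ?]; lia.
Qed.

End Gamma.

Section LargeBSums.
Variables a b : nat.
Hypotheses (hb2 : (2 <= b)%N) (hba : (b <= a)%N).

Let adm : admissible a b. Proof. by left. Qed.

Lemma ratio_lt_ec n : ~~ odd n -> (0 < n)%N ->
  2 * (a%:R / b%:R) < 4 + 2 * ((ec a b n)%:~R : rat).
Proof.
move=> n_even n_gt0; have n_ge2 : (2 <= n)%N by case: n n_even n_gt0 => [|[|n]].
have := @ec_ge a b hb2 hba n n_ge2; rewrite -(ler_int rat) rmorphB rmorphM /=.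
have : (a%:R / b%:R : rat) <= a%:R.
  by rewrite ler_pdivrMr ?ltr0n ?(ltnW hb2) // ler_peMr ?ler0n // ler1n ltnW.
have : (1 : rat) <= a%:R by rewrite ler1n (leq_trans _ hba) // ltnW.
have : (2 : rat) <= b%:R by rewrite ler_nat.
nra.
Qed.

Lemma beta_sum_not_root j k :
  ~ is_root a b (vadd (beta1 a b k) (beta1 a b j))
  /\ ~ is_root a b (vadd (beta2 a b k) (beta2 a b j)).
Proof.
wlog le_kj : j k / (k <= j)%N.
  move=> W; case: (leqP k j) => [/W // | /ltnW /W].
  by rewrite vaddC [vadd (beta2 _ _ j) _]vaddC.
rewrite -(subnKC le_kj).
by split=> [/(beta1_sum_root a b adm) | /(beta2_sum_root a b adm)] [_ n_even n_gt0];
  have := ratio_lt_ec _ n_even n_gt0; lra.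
Qed.

End LargeBSums.

Section UnitBSums.
Variable a : nat.
Hypothesis ha5 : (5 <= a)%N.

Let adm : admissible a 1. Proof. by right. Qed.

Lemma beta_sum_b1 m : ~~ odd m ->
  vadd (beta1 a 1 m.+1) (beta1 a 1 m.+3) = beta1 a 1 m.+2
  /\ vadd (beta2 a 1 m) (beta2 a 1 m.+2) = beta2 a 1 m.+1.
Proof.
move=> m_even.
have odd1 : odd m.+1 by rewrite /= m_even.
have odd3 : odd m.+3 by rewrite /= !negbK.
have even2 : ~~ odd m.+2 by rewrite /= !negbK.
have := cseq_odd a 1 _ odd1; have := cseq_odd a 1 _ odd3; have := cseq_even a 1 _ even2.
have := cseqSS a 1 m.+1; have := dseqSS a 1 m.+2; have := dseqSS a 1 m.
by rewrite /vadd /Defs.beta1 /Defs.beta2 /= => *; split; congr (_, _); lia.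
Qed.

Lemma real_root_beta_sum_b1 k :
  real_root a 1 (vadd (beta1 a 1 (2 * k + 1)) (beta1 a 1 (2 * k + 3)))
  /\ real_root a 1 (vadd (beta2 a 1 (2 * k)) (beta2 a 1 (2 * k + 2))).
Proof.
have k2_even : ~~ odd (2 * k) by rewrite oddM.
have [sum1 sum2] := beta_sum_b1 _ k2_even.
rewrite !addn1 !addn2 !addn3 sum1 sum2.
have [W1 _] := beta_Worbit a 1 (2 * k).+2; have [_ W2] := beta_Worbit a 1 (2 * k).+1.
have [N1 _] := norm2_beta_sum_gt0 a 1 adm (2 * k).+3 (2 * k).+1.
have [_ N2] := norm2_beta_sum_gt0 a 1 adm (2 * k).+2 (2 * k).
by rewrite sum1 sum2 in N1 N2 *; split; split=> //; left.
Qed.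

Lemma real_root_beta_sum_b1_uniq j k :
  (real_root a 1 (vadd (beta1 a 1 j) (beta1 a 1 k)) ->
    exists m, (j = 2 * m + 1 /\ k = 2 * m + 3)%N \/ (j = 2 * m + 3 /\ k = 2 * m + 1)%N)
  /\ (real_root a 1 (vadd (beta2 a 1 j) (beta2 a 1 k)) ->
    exists m, (j = 2 * m /\ k = 2 * m + 2)%N \/ (j = 2 * m + 2 /\ k = 2 * m)%N).
Proof.
wlog le_jk : j k / (j <= k)%N.
  move=> W; case: (leqP j k) => [/W // | /ltnW /W [W1 W2]].
  by split; rewrite vaddC; [move/W1 | move/W2] => -[m [[-> ->] | [-> ->]]];
    exists m; [right | left | right | left].
rewrite -(subnKC le_jk); set n := (k - j)%N.
split=> -[root _].
- have [j_odd n_even n_gt0 le2a] := beta1_sum_root a 1 adm _ _ root.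
  rewrite (ec_b1_le_eq2 a ha5 _ n_even n_gt0 le2a); exists j./2; left.
  by have := odd_double_half j; rewrite j_odd -muln2; lia.
- have [/negbTE j_even n_even n_gt0 le2a] := beta2_sum_root a 1 adm _ _ root.
  rewrite (ec_b1_le_eq2 a ha5 _ n_even n_gt0 le2a); exists j./2; left.
  by have := odd_double_half j; rewrite j_even -muln2; lia.
Qed.

End UnitBSums.

Theorem proposition4p6 (a b : nat) (hba : (b <= a)%N) (hb : (1 <= b)%N)
  (hab : (2 <= b)%N \/ (b = 1%N /\ (5 <= a)%N)) :
  [/\ (* (1) *)
      (forall j k : nat, 0 < norm2 a b (vadd (beta1 a b k) (beta1 a b j)))
      /\ (forall j k : nat, 0 < norm2 a b (vadd (beta2 a b k) (beta2 a b j))),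
      (* (1a) *)
      ((2 <= b)%N -> forall j k : nat,
          ~ is_root a b (vadd (beta1 a b k) (beta1 a b j))
          /\ ~ is_root a b (vadd (beta2 a b k) (beta2 a b j))),
      (* (1b) *)
      (b = 1%N -> (5 <= a)%N ->
        [/\ forall k : nat,
              real_root a b (vadd (beta1 a b (2 * k + 1)) (beta1 a b (2 * k + 3)))
              /\ real_root a b (vadd (beta2 a b (2 * k)) (beta2 a b (2 * k + 2))),
            forall j k : nat, real_root a b (vadd (beta1 a b j) (beta1 a b k)) ->
              exists m : nat, (j = 2 * m + 1 /\ k = 2 * m + 3)%N
                              \/ (j = 2 * m + 3 /\ k = 2 * m + 1)%N
          & forall j k : nat, real_root a b (vadd (beta2 a b j) (beta2 a b k)) ->
              exists m : nat, (j = 2 * m /\ k = 2 * m + 2)%N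
                              \/ (j = 2 * m + 2 /\ k = 2 * m)%N])
    & (* (2) *)
      forall j k : nat,
        is_root a b (vadd (beta1 a b k) (beta2 a b j))
        /\ (~ (b = 1%N /\ k = 0%N /\ j = 0%N) ->
            norm2 a b (vadd (beta1 a b k) (beta2 a b j)) <= 0)].
Proof.
have adm : admissible a b by case: hab => [? | []]; [left | right].
split.
- by split=> j k; have [] := norm2_beta_sum_gt0 a b adm j k.
- by move=> hb2; apply: beta_sum_not_root.
- move=> b1 ha5; subst b; split.
  + exact: real_root_beta_sum_b1.
  + by move=> j k; have [] := real_root_beta_sum_b1_uniq a ha5 j k.
  + by move=> j k; have [] := real_root_beta_sum_b1_uniq a ha5 j k.
- by move=> j k; exact: gamma_root a b adm k j.
Qed.
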